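(* Let $X$ be a connected graph. Then there exists a constant $C_X$ such that every connected $X$-free graph $G$ (of order at least $3$) satisfies $rx_3(G)\leq sdiam_3(G)+C_X$ if and only if $X=P_3$.
   Context: All graphs are finite, simple, undirected. An edge-coloring of $G$ assigns colors to edges (adjacent edges may share a color). A tree in an edge-colored graph is rainbow if no two of its edges have the same color. For $S\subseteq V(G)$, an $S$-tree is a tree in $G$ containing all vertices of $S$. A $k$-rainbow coloring of a connected graph $G$ is an edge-coloring such that for every set $S$ of $k$ vertices there is a rainbow $S$-tree; $rx_k(G)$, the $k$-rainbow index, is the minimum number of colors in a $k$-rainbow coloring of $G$ (defined for connected $G$ with at least $k$ vertices). The Steiner distance $d(S)$ of $S\subseteq V(G)$ is the minimum number of edges of an $S$-tree; the $k$-Steiner diameter $sdiam_k(G)$ is the maximum of $d(S)$ over all $k$-element $S\subseteq V(G)$. For a family $\mathcal{F}$ of graphs, $G$ is $\mathcal{F}$-free if $G$ contains no induced subgraph isomorphic to a member of $\mathcal{F}$; $X$-free means $\{X\}$-free. $P_n$ is the path on $n$ vertices. *)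

From Stdlib Require Import ClassicalEpsilon.
From HB Require Import structures.
From mathcomp Require Import all_boot.

Set Implicit Arguments.
Unset Strict Implicit.
Unset Printing Implicit Defensive.

Definition simple_graph (T : finType) (e : rel T) : Prop :=
  symmetric e /\ irreflexive e.

Definition connected_graph (T : finType) (e : rel T) : Prop :=
  forall x y : T, connect e x y.

Definition is_tree_in (T : finType) (e : rel T) (V : {set T}) (F : rel T) : Prop :=
  [/\ (forall x y, F x y -> e x y /\ F y x),
      (forall x y, F x y -> x \in V),
      (forall x y, x \in V -> y \in V -> connect F x y),
      V != set0 &
      ~ (exists p : seq T, [/\ 2 < size p, uniq p & cycle F p])].

Definition S_tree (T : finType) (e : rel T) (S : {set T}) (V : {set T}) (F : rel T) : Prop :=
  is_tree_in e V F /\ S \subset V.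

Definition num_edges (T : finType) (F : rel T) : nat :=
  #|[set [set p.1; p.2] | p in [set q : T * T | F q.1 q.2]]|.

Definition edge_coloring (T : finType) (e : rel T) (N : nat) (c : T -> T -> nat) : Prop :=
  forall x y, e x y -> c x y = c y x /\ c x y < N.

Definition rainbow (T : finType) (c : T -> T -> nat) (F : rel T) : Prop :=
  forall x y u v, F x y -> F u v -> c x y = c u v -> [set x; y] = [set u; v].

Definition k_rainbow_coloring (T : finType) (e : rel T) (k : nat) (c : T -> T -> nat) : Prop :=
  forall S : {set T}, #|S| = k ->
    exists (V : {set T}) (F : rel T), S_tree e S V F /\ rainbow c F.

Definition least (P : nat -> Prop) : nat :=
  epsilon (inhabits 0%N) (fun n => P n /\ forall m, P m -> n <= m).

Definition rainbow_index (T : finType) (e : rel T) (k : nat) : nat :=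
  least (fun N => exists c, edge_coloring e N c /\ k_rainbow_coloring e k c).

Definition steiner_dist (T : finType) (e : rel T) (S : {set T}) : nat :=
  least (fun n => exists (V : {set T}) (F : rel T), S_tree e S V F /\ num_edges F = n).

Definition steiner_diam (T : finType) (e : rel T) (k : nat) : nat :=
  \max_(S : {set T} | #|S| == k) steiner_dist e S.

Definition contains_induced (TX : finType) (eX : rel TX) (T : finType) (e : rel T) : Prop :=
  exists f : TX -> T, injective f /\ forall a b, e (f a) (f b) = eX a b.

Definition X_free (TX : finType) (eX : rel TX) (T : finType) (e : rel T) : Prop :=
  ~ contains_induced eX e.

Definition path_graph (n : nat) : rel 'I_n :=
  fun i j => (i.+1 == j :> nat) || (j.+1 == i :> nat).

Definition isomorphic (T1 : finType) (e1 : rel T1) (T2 : finType) (e2 : rel T2) : Prop :=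
  exists f : T1 -> T2, bijective f /\ forall a b, e2 (f a) (f b) = e1 a b.
Arguments path_graph n : clear implicits.

From HB Require Import structures.
From mathcomp Require Import all_boot perm.
From Stdlib Require Import Classical ClassicalEpsilon.

Set Implicit Arguments.
Unset Strict Implicit.
Unset Printing Implicit Defensive.

(* In a 3-rainbow colouring, a tree through three pendant vertices must use their
   three pendant edges, so pendant edges get pairwise distinct colours and rx_3 is at
   least the number of pendant vertices.  The stars K_{1,n} and the coronas
   K_n o K_1 have n pendant vertices but Steiner 3-diameter bounded independently
   of n.  Hence, if rx_3 <= sdiam_3 + C on X-free graphs, X is an induced subgraph
   of a star, i.e. a star itself; since coronas are claw-free, X has no claw, so
   X = P_3.  Conversely a connected P_3-free graph is complete, and a complete
   graph has a 3-rainbow colouring with 6 colours. *)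

Section Least.
Variable P : nat -> Prop.

Lemma exists_least m : P m -> exists n, P n /\ forall k, P k -> n <= k.
Proof.
elim/ltn_ind: m => m IH Pm.
have [[k [ltkm Pk]]|no_lt] := classic (exists k, k < m /\ P k).
  exact: IH k ltkm Pk.
exists m; split=> // k Pk; rewrite leqNgt; apply/negP => ltkm.
by apply: no_lt; exists k.
Qed.

Lemma least_spec m : P m -> P (least P) /\ forall k, P k -> least P <= k.
Proof.
move=> Pm; apply: (epsilon_spec (inhabits 0) (fun n => P n /\ forall k, P k -> n <= k)).
exact: exists_least Pm.
Qed.

Lemma least_le m : P m -> least P <= m.
Proof. by move=> Pm; apply: (proj2 (least_spec Pm)). Qed.

End Least.

Lemma cards3 (T : finType) (a b c : T) : a != b -> a != c -> b != c ->
  #|[set a; b; c]| = 3.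
Proof. by move=> ab ac bc; rewrite -setUA cardsU1 cards2 bc !inE negb_or ab ac. Qed.

Lemma cards_eq3 (T : finType) (S : {set T}) : #|S| = 3 ->
  exists a b c, [/\ a != b, a != c, b != c & S = [set a; b; c]].
Proof.
move=> S3; have /card_gt2P [a [b [c [[aS bS cS] [ab bc ca]]]]] : 2 < #|S| by rewrite S3.
have ac : a != c by rewrite eq_sym.
exists a, b, c; split=> //; apply/esym/eqP; rewrite eqEcard S3 cards3 // andbT.
by apply/subsetP => x; rewrite !inE => /orP [/orP [] |] /eqP ->.
Qed.

Lemma exists_neq2 (T : finType) (i j : T) : 2 < #|T| -> exists k, k != i /\ k != j.
Proof.
move=> T3; have : ~~ ([set: T] \subset [set i; j]).
  apply/negP => /subset_leq_card; rewrite cardsT => /(leq_trans T3).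
  by apply/negP; rewrite -leqNgt cards2; case: (i != j).
by case/subsetPn => k _; rewrite !inE negb_or => /andP [ki kj]; exists k.
Qed.

Section Acyclic.
Variable T : finType.

Lemma connect_neighbor (F : rel T) x y : connect F x y -> x != y -> exists z, F x z.
Proof.
case/connectP => [[|z p] /= Fp ->]; first by rewrite eqxx.
by case/andP: Fp => Fxz _ _; exists z.
Qed.

Lemma rank_acyclic (F : rel T) (r : T -> nat) : symmetric F ->
  (forall x y, F x y -> r x != r y) ->
  (forall x y z, F x y -> F x z -> r y < r x -> r z < r x -> y = z) ->
  ~ (exists p : seq T, [/\ 2 < size p, uniq p & cycle F p]).
Proof.
move=> Fsym Fr Fdown [p [p3 up cp]]; case: p p3 up cp => [//|x0 p0] p3 up cp.
set p := x0 :: p0 in p3 up cp.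
have [m mp max_m] := @arg_maxnP T x0 (mem p) r (mem_head x0 p0).
have [i [|x [|y0 q]] rot_p] := rot_to mp.
1,2: by move: p3; rewrite -(size_rot i) rot_p.
have : cycle F [:: m, x, y0 & q] by rewrite -rot_p rot_cycle.
rewrite /= rcons_path => /andP [Fmx /andP [_ /andP [_ Fym]]].
have : uniq [:: m, x, y0 & q] by rewrite -rot_p rot_uniq.
set y := last y0 q in Fym; have yq : y \in y0 :: q by apply: mem_last.
have inp z : z \in [:: x, y0 & q] -> z \in p.
  by move=> zq; rewrite -(mem_rot i) rot_p inE zq orbT.
have below z : z \in [:: x, y0 & q] -> F m z -> r z < r m.
  by move=> zq Fmz; rewrite ltn_neqAle eq_sym Fr //=; exact: max_m (inp _ zq).
rewrite Fsym in Fym.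
have rx : r x < r m by apply: below; rewrite ?inE ?eqxx.
have ry : r y < r m by apply: below; rewrite // inE yq orbT.
by rewrite /= -(Fdown _ _ _ Fmx Fym rx ry) in yq *; rewrite yq !andbF.
Qed.

End Acyclic.

Section ParentTree.
Variables (T : finType) (e : rel T) (parent : T -> T) (root : T) (rank : T -> nat).
Hypotheses (e_sym : symmetric e)
  (rank_parent : forall x, x != root -> rank (parent x) < rank x)
  (e_parent : forall x, x != root -> e x (parent x)).

Definition parent_rel (V : {set T}) : rel T := fun x y =>
  [&& x \in V, y \in V & ((x != root) && (parent x == y)) || ((y != root) && (parent y == x))].

Lemma parent_rel_sym (V : {set T}) : symmetric (parent_rel V).
Proof. by move=> x y; rewrite /parent_rel andbCA orbC. Qed.

Lemma parent_relP (V : {set T}) x y : parent_rel V x y ->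
  exists u, [/\ u \in V, u != root & (x = u /\ y = parent u) \/ (y = u /\ x = parent u)].
Proof.
case/and3P => xV yV /orP [] /andP [ur /eqP Eu]; first by exists x; split=> //; left.
by exists y; split=> //; right.
Qed.

Lemma parent_rel_tree (V : {set T}) : root \in V -> {in V, forall x, parent x \in V} ->
  is_tree_in e V (parent_rel V).
Proof.
move=> rootV parentV.
have F_rank x y : parent_rel V x y ->
    (parent x = y /\ rank y < rank x) \/ (parent y = x /\ rank x < rank y).
  by case/and3P=> _ _ /orP [] /andP [r /eqP <-]; [left | right]; split; rewrite ?rank_parent.
have to_root x : x \in V -> connect (parent_rel V) x root.
  have [n] : exists n, rank x < n by exists (rank x).+1.
  elim: n x => [|n IH] x; rewrite ?ltn0 // => lt_xn xV.
  have [->//|xr] := eqVneq x root.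
  apply: connect_trans (IH _ (leq_trans (rank_parent xr) lt_xn) (parentV _ xV)).
  by apply: connect1; rewrite /parent_rel xV parentV // xr eqxx.
split.
- move=> x y Fxy; split; last by rewrite parent_rel_sym.
  by case/and3P: Fxy => _ _ /orP [] /andP [r /eqP <-]; rewrite ?e_parent // e_sym e_parent.
- by move=> x y /and3P [].
- move=> x y xV yV; apply: connect_trans (to_root _ xV) _.
  by rewrite (sym_connect_sym (parent_rel_sym V)) to_root.
- by apply/set0Pn; exists root.
apply: (rank_acyclic (r := rank)) (parent_rel_sym V) _ _.
  by move=> x y /F_rank [] [_ lt]; rewrite neq_ltn lt ?orbT.
move=> x y z /F_rank Fxy /F_rank Fxz ltyx ltzx.
case: Fxy Fxz => [[<- _]|[_ /ltnW]]; last by rewrite leqNgt ltyx.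
by case=> [[-> _]|[_ /ltnW]] //; rewrite leqNgt ltzx.
Qed.

Lemma parent_rel_rainbow (V : {set T}) c : (forall x y, c x y = c y x) ->
  {in V &, forall u w, u != root -> w != root -> c u (parent u) = c w (parent w) -> u = w} ->
  rainbow c (parent_rel V).
Proof.
move=> c_sym c_inj x y u v /parent_relP [x' [x'V x'r Exy]] /parent_relP [u' [u'V u'r Euv]].
have edge a b a' : (a = a' /\ b = parent a') \/ (b = a' /\ a = parent a') ->
    c a b = c a' (parent a') /\ [set a; b] = [set a'; parent a'].
  by case=> [] [-> ->]; rewrite 1?c_sym 1?setUC.
have [-> ->] := edge _ _ _ Exy; have [-> ->] := edge _ _ _ Euv.
by move/c_inj => ->.
Qed.

End ParentTree.

Section SteinerAndRainbow.
Variables (T : finType) (e : rel T).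

Lemma num_edges_le (V : {set T}) (F : rel T) :
  (forall x y, F x y -> x \in V /\ y \in V) -> num_edges F <= #|V| * #|V|.
Proof.
move=> FV; rewrite /num_edges -cardsX; apply: leq_trans (leq_imset_card _ _) _.
by apply: subset_leq_card; apply/subsetP => q; rewrite !inE => /FV [-> ->].
Qed.

Lemma steiner_diam_le_sq n k :
  (forall S : {set T}, #|S| = n -> exists V F, S_tree e S V F /\ #|V| <= k) ->
  steiner_diam e n <= k * k.
Proof.
move=> small_trees; apply/bigmax_leqP => S /eqP /small_trees [V [F [StF Vk]]].
have FV x y : F x y -> x \in V /\ y \in V.
  case: StF => [[Fe FV _ _ _] _] Fxy; split; first exact: FV Fxy.
  by apply: (FV y x); case: (Fe _ _ Fxy).
apply: leq_trans (least_le (m := num_edges F) _) _; first by exists V, F.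
by apply: leq_trans (num_edges_le FV) _; apply: leq_mul.
Qed.

Lemma rainbow_index_spec k :
  (forall S : {set T}, #|S| = k -> exists V F, S_tree e S V F) ->
  exists c, edge_coloring e (rainbow_index e k) c /\ k_rainbow_coloring e k c.
Proof.
move=> trees; pose P N := exists c, edge_coloring e N c /\ k_rainbow_coloring e k c.
suff : P #|{: {set T}}| by case/least_spec.
pose c (x y : T) := nat_of_ord (enum_rank [set x; y]); exists c.
split=> [x y _|S /trees [V [F StF]]]; first by rewrite /c setUC.
by exists V, F; split=> // x y u v _ _ /val_inj /enum_rank_inj.
Qed.

Section Pendant.
Variables (n : nat) (leaf hub : 'I_n -> T).
Hypotheses (n_gt2 : 2 < n) (leaf_inj : injective leaf)
  (leaf_hub : forall i j, leaf i != hub j) (e_leaf_hub : forall i, e (leaf i) (hub i))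
  (hub_unique : forall i y, e (leaf i) y -> y = hub i).

(* A rainbow tree through [leaf i], [leaf j] and a third leaf must contain both
   pendant edges [leaf i -- hub i] and [leaf j -- hub j]. *)
Lemma pendant_colors_neq c : k_rainbow_coloring e 3 c ->
  forall i j, i != j -> c (leaf i) (hub i) != c (leaf j) (hub j).
Proof.
move=> rb i j ij.
have [|k [ki kj]] := exists_neq2 i j; first by rewrite card_ord.
rewrite ![k == _]eq_sym in ki kj.
have leaf_neq a b : a != b -> leaf a != leaf b.
  by move=> ab; apply: contra ab => /eqP /leaf_inj ->.
have [V [F [[[Fe _ Fconn _ _] SV] rbF]]] :=
  rb _ (cards3 (leaf_neq _ _ ij) (leaf_neq _ _ ki) (leaf_neq _ _ kj)).
have pendant_in_tree a b : leaf a \in V -> leaf b \in V -> a != b -> F (leaf a) (hub a).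
  move=> aV bV ab; have [z Fz] := connect_neighbor (Fconn _ _ aV bV) (leaf_neq _ _ ab).
  by rewrite -(hub_unique (proj1 (Fe _ _ Fz))).
have iV : leaf i \in V by apply: (subsetP SV); rewrite !inE eqxx.
have jV : leaf j \in V by apply: (subsetP SV); rewrite !inE eqxx !orbT.
apply/negP => /eqP same; have := rbF _ _ _ _ (pendant_in_tree _ _ iV jV ij).
move=> /(_ _ _ (pendant_in_tree _ _ jV iV _) same) /setP /(_ (leaf i)).
rewrite eq_sym ij !inE eqxx (negbTE (leaf_neq _ _ ij)) => /(_ isT) /esym /eqP E.
by move: (leaf_hub i j); rewrite E eqxx.
Qed.

Lemma pendant_count_le_colors N c :
  edge_coloring e N c -> k_rainbow_coloring e 3 c -> n <= N.
Proof.
move=> col rb; have lt_N i : c (leaf i) (hub i) < N by case: (col _ _ (e_leaf_hub i)).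
pose g i : 'I_N := Ordinal (lt_N i).
suff /leq_card : injective g by rewrite !card_ord.
move=> i j /(congr1 val) /= E; apply/eqP; apply: contraT => ij.
by move: (pendant_colors_neq rb ij); rewrite E eqxx.
Qed.

Lemma pendant_count_le_rainbow_index :
  (forall S : {set T}, #|S| = 3 -> exists V F, S_tree e S V F) ->
  n <= rainbow_index e 3.
Proof.
by case/rainbow_index_spec => c [col rb]; apply: pendant_count_le_colors col rb.
Qed.

End Pendant.
End SteinerAndRainbow.

Definition star_rel (T : eqType) (a : T) : rel T := fun x y => (x == a) != (y == a).

Definition star_graph n : rel (option 'I_n) := star_rel None.
Arguments star_graph n : clear implicits.

Section Star.
Variables (T : finType) (a : T).

Lemma star_rel_simple : simple_graph (star_rel a).
Proof. by split=> [x y|x]; rewrite /star_rel ?eqxx // eq_sym. Qed.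

Lemma star_rel_connected : connected_graph (star_rel a).
Proof.
have to_a x : connect (star_rel a) x a.
  by case: (eqVneq x a) => [->//|xa]; apply: connect1; rewrite /star_rel (negbTE xa) eqxx.
move=> x y; apply: connect_trans (to_a x) _.
by rewrite (sym_connect_sym (proj1 star_rel_simple)).
Qed.

Lemma star_rel_S_tree (S : {set T}) :
  exists V F, S_tree (star_rel a) S V F /\ #|V| <= #|S|.+1.
Proof.
exists (a |: S), (parent_rel (fun _ => a) a (a |: S)).
split; last by rewrite cardsU1; case: (a \notin S).
split; last exact: subsetUr.
apply: (parent_rel_tree (rank := fun x => x != a)) => [|x xa|x xa||x _].
- exact: (proj1 star_rel_simple).
- by rewrite xa eqxx.
- by rewrite /star_rel (negbTE xa) eqxx.
- exact: setU11.
- exact: setU11.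
Qed.

End Star.

Section StarEmbedding.
Variables (T1 T2 : finType) (a1 : T1) (a2 : T2).

Lemma exists_inj_fixing : #|T1| <= #|T2| -> exists f : T1 -> T2, injective f /\ f a1 = a2.
Proof.
move=> le12; pose f0 x := enum_val (widen_ord le12 (enum_rank x)) : T2.
have f0_inj : injective f0.
  by move=> x y /enum_val_inj /(congr1 val) /= /ord_inj /enum_rank_inj.
exists (tperm (f0 a1) a2 \o f0); split; first exact: inj_comp perm_inj f0_inj.
exact: tpermL.
Qed.

Lemma star_rel_inj f : injective f -> f a1 = a2 ->
  forall x y, star_rel a2 (f x) (f y) = star_rel a1 x y.
Proof. by move=> f_inj fa1 x y; rewrite /star_rel -fa1 !(inj_eq f_inj). Qed.

Lemma star_rel_induced : #|T1| <= #|T2| -> contains_induced (star_rel a1) (star_rel a2).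
Proof.
move=> le12; have [f [f_inj fa1]] := exists_inj_fixing le12.
by exists f; split; last exact: star_rel_inj f_inj fa1.
Qed.

Lemma star_rel_isomorphic : #|T1| = #|T2| -> isomorphic (star_rel a1) (star_rel a2).
Proof.
move=> eq12; have [f [f_inj fa1]] := exists_inj_fixing (eq_leq eq12).
exists f; split; last exact: star_rel_inj f_inj fa1.
by apply: inj_card_bij f_inj _; rewrite eq12.
Qed.

End StarEmbedding.

Lemma star_graph_gap C :
  steiner_diam (star_graph (C + 17)) 3 + C < rainbow_index (star_graph (C + 17)) 3.
Proof.
set n := C + 17; have n_gt2 : 2 < n by rewrite /n addnC.
have trees (S : {set option 'I_n}) : #|S| = 3 ->
    exists V F, S_tree (star_graph n) S V F /\ #|V| <= 4.
  by move=> S3; rewrite -S3; apply: star_rel_S_tree.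
have diam : steiner_diam (star_graph n) 3 <= 4 * 4 := steiner_diam_le_sq trees.
have : n <= rainbow_index (star_graph n) 3.
  apply: (pendant_count_le_rainbow_index (leaf := Some) (hub := fun _ => None)) => //.
  - by move=> i j [].
  - by move=> i [j|].
  - by move=> S /trees [V [F [StF _]]]; exists V, F.
by apply: leq_trans; rewrite addnC /n ltn_add2l ltnS.
Qed.

(* [corona n] is K_n with a pendant vertex [inr i] attached to each vertex [inl i]. *)
Definition corona n : rel ('I_n + 'I_n) := fun x y =>
  match x, y with
  | inl i, inl j => i != j
  | inl i, inr j | inr i, inl j => i == j
  | inr _, inr _ => false
  end.
Arguments corona n : clear implicits.

Section Corona.
Variable n : nat.

Lemma corona_simple : simple_graph (corona n).
Proof. by split=> [[i|i] [j|j]|[i|i]] /=; rewrite ?eqxx // eq_sym. Qed.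

Lemma corona_pendant i y : corona n (inr i) y -> y = inl i.
Proof. by case: y => // j /eqP ->. Qed.

Lemma corona_claw_free : ~ contains_induced (star_graph 3) (corona n).
Proof.
case=> g [g_inj gE].
have leaves_nonadj k l : k != l -> corona n (g (Some k)) (g (Some l)) = false.
  by move=> _; rewrite gE.
(* Two leaves of a claw lie on different sides: two [inl]'s are adjacent, and
   two [inr]'s cannot share the neighbour [g None]. *)
have sides k l : k != l -> is_inl (g (Some k)) != is_inl (g (Some l)).
  move=> kl; have ne : g (Some k) != g (Some l) by apply: contra kl => /eqP /g_inj [->].
  have gk : corona n (g None) (g (Some k)) by rewrite gE.
  have gl : corona n (g None) (g (Some l)) by rewrite gE.
  move: (leaves_nonadj _ _ kl) gk gl ne.
  case: (g None) (g (Some k)) (g (Some l)) => [c|c] [a|a] [b|b] //=.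
  - by move/negbFE/eqP ->; rewrite eqxx.
  - by move=> _ /eqP <- /eqP <-; rewrite eqxx.
  - by move=> _ /eqP <- /eqP <-; rewrite eqxx.
pose o0 := @Ordinal 3 0 isT; pose o1 := @Ordinal 3 1 isT; pose o2 := @Ordinal 3 2 isT.
have := sides o0 o1 isT; have := sides o0 o2 isT; have := sides o1 o2 isT.
by do 3 case: (is_inl _).
Qed.

Section Rooted.
Variable r0 : 'I_n.

Definition corona_parent (x : 'I_n + 'I_n) : 'I_n + 'I_n :=
  if x is inr i then inl i else inl r0.

Lemma corona_connected : connected_graph (corona n).
Proof.
have inl_to_r0 i : connect (corona n) (inl i) (inl r0).
  by have [->//|ir] := eqVneq i r0; apply: connect1 => /=.
have to_r0 x : connect (corona n) x (inl r0).
  case: x => [i|i]; first exact: inl_to_r0.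
  by apply: connect_trans (inl_to_r0 i); apply: connect1 => /=.
move=> x y; apply: connect_trans (to_r0 x) _.
by rewrite (sym_connect_sym (proj1 corona_simple)).
Qed.

Lemma corona_S_tree (S : {set 'I_n + 'I_n}) :
  exists V F, S_tree (corona n) S V F /\ #|V| <= (#|S| + #|S|).+1.
Proof.
set V := inl r0 |: (S :|: corona_parent @: S).
exists V, (parent_rel corona_parent (inl r0) V); split; last first.
  rewrite cardsU1 cardsU -add1n; apply: leq_add; first by case: (_ \notin _).
  by apply: leq_trans (leq_subr _ _) _; rewrite leq_add2l leq_imset_card.
split; last by apply/subsetP => x xS; rewrite !inE xS orbT.
pose rank (x : 'I_n + 'I_n) := if x is inl i then nat_of_bool (i != r0) else 2.
apply: (parent_rel_tree (rank := rank)) => [||||[i|i]].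
- exact: (proj1 corona_simple).
- case=> [i|i] /=; last by case: (i != r0).
  by case: (eqVneq i r0) => [->|]; rewrite ?eqxx.
- by case=> [i|i] /=; rewrite ?eqxx.
- exact: setU11.
- by move=> _; apply: setU11.
- rewrite !inE /= => /orP [iS|/imsetP [[y|y] _ //]].
  by apply/or3P/Or33/imsetP; exists (inr i).
Qed.

End Rooted.
End Corona.

Lemma corona_gap C :
  steiner_diam (corona (C + 50)) 3 + C < rainbow_index (corona (C + 50)) 3.
Proof.
set n := C + 50; have n_gt2 : 2 < n by rewrite /n addnC.
have r0 : 'I_n := Ordinal (ltnW (ltnW n_gt2)).
have trees (S : {set 'I_n + 'I_n}) : #|S| = 3 ->
    exists V F, S_tree (corona n) S V F /\ #|V| <= 7.
  by move=> S3; have := corona_S_tree r0 S; rewrite S3.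
have diam : steiner_diam (corona n) 3 <= 7 * 7 := steiner_diam_le_sq trees.
have : n <= rainbow_index (corona n) 3.
  apply: (pendant_count_le_rainbow_index (leaf := inr) (hub := inl)) => //.
  - by move=> i j [].
  - by move=> i /=.
  - exact: corona_pendant.
  - by move=> S /trees [V [F [StF _]]]; exists V, F.
by apply: leq_trans; rewrite addnC /n ltn_add2l ltnS.
Qed.

Section P3Free.
Variables (T : finType) (e : rel T).
Hypotheses (e_simple : simple_graph e) (e_free : X_free (path_graph 3) e).

Lemma P3_free_triangle x z y : e x z -> e z y -> x != y -> e x y.
Proof.
have [e_sym e_irr] := e_simple.
move=> xz zy xy; apply: contraT => not_xy; case: e_free.
have xz' : x != z by apply: contraTneq xz => ->; rewrite e_irr.
have zy' : z != y by apply: contraTneq zy => ->; rewrite e_irr.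
exists (fun i : 'I_3 => nth x [:: x; z; y] i); split.
  move=> i j /eqP; rewrite nth_uniq ?size_tuple ?ltn_ord //=.
    by move/eqP/val_inj.
  by rewrite !inE negb_or xz' xy zy'.
by do 2 case=> [[|[|[|?]]] ?] //=; rewrite /path_graph /= ?(negbTE not_xy) //
  e_sym ?(negbTE not_xy) ?xz ?zy.
Qed.

Lemma P3_free_complete : connected_graph e -> forall x y, x != y -> e x y.
Proof.
move=> e_conn x y; have /connectP [p] := e_conn x y.
elim/last_ind: p y => [|p w IH] y; first by move=> _ ->; rewrite eqxx.
rewrite rcons_path last_rcons => /andP [xp e_last] -> xw.
have [lx|xl] := eqVneq x (last x p); first by rewrite lx.
exact: P3_free_triangle (IH _ xp erefl xl) e_last xw.
Qed.

End P3Free.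

Definition class_color (p q : nat) := if p == q then p else 3 + (p + q) %% 3.

Lemma class_color_sym p q : class_color p q = class_color q p.
Proof.
rewrite /class_color; have [->//|pq] := eqVneq p q.
by rewrite [p + q]addnC.
Qed.

Lemma class_color_lt p q : p < 3 -> q < 3 -> class_color p q < 6.
Proof. by case: p => [|[|[|]]] //; case: q => [|[|[|]]]. Qed.

Lemma class_color_neq p q r : p < 3 -> q < 3 -> r < 3 -> p != r ->
  class_color p q != class_color q r.
Proof. by case: p => [|[|[|]]] //; case: q => [|[|[|]]] //; case: r => [|[|[|]]]. Qed.

Section Complete.
Variables (T : finType) (e : rel T).
Hypothesis e_complete : forall x y, x != y -> e x y.

Lemma complete_sym : symmetric e.
Proof. by move=> x y; have [->//|xy] := eqVneq x y; rewrite !e_complete // eq_sym. Qed.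

Lemma complete_path_S_tree (x0 : T) (s : seq T) (c : T -> T -> nat) (S : {set T}) :
  uniq (x0 :: s) -> {subset S <= x0 :: s} -> (forall x y, c x y = c y x) ->
  uniq (pairmap c x0 s) -> exists V F, S_tree e S V F /\ rainbow c F.
Proof.
move=> up Sp c_sym uc; set p := x0 :: s in up Sp *.
pose parent x := nth x0 p (index x s).
have index_p x : x != x0 -> index x p = (index x s).+1 by rewrite /= eq_sym => /negbTE ->.
have rank_parent x : x != x0 -> index (parent x) p < index x p.
  by move=> xx0; rewrite index_uniq ?index_p // ltnS index_size.
have parent_in x : parent x \in p by rewrite mem_nth // ltnS index_size.
exists [set x in p], (parent_rel parent x0 [set x in p]); split; first split.
- apply: (@parent_rel_tree _ _ parent x0 (index^~ p) complete_sym rank_parent).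
  + move=> x xx0; apply: e_complete.
    by apply: contraTneq (rank_parent _ xx0) => <-; rewrite ltnn.
  + by rewrite inE mem_head.
  + by move=> x _; rewrite inE parent_in.
- by apply/subsetP => x /Sp; rewrite inE.
apply: (@parent_rel_rainbow _ parent x0 _ _ c_sym) => u w; rewrite !inE.
have in_s x : x \in p -> x != x0 -> x \in s by rewrite inE => /orP [/eqP->|]; rewrite ?eqxx.
have color x : x \in s -> c x (parent x) = nth 0 (pairmap c x0 s) (index x s).
  by move=> xs; rewrite (nth_pairmap x0) ?index_mem // nth_index // c_sym.
move=> up' wp' ux0 wx0; rewrite !color ?in_s //.
move/eqP; rewrite nth_uniq ?size_pairmap ?index_mem ?in_s // => /eqP.
by move/(congr1 (nth x0 s)); rewrite !nth_index ?in_s.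
Qed.

(* Vertices are split into the classes [{t1}], [{t2}] and the rest; an edge is
   coloured by the pair of classes of its ends. *)
Lemma complete_rainbow_index_le6 : 2 < #|T| -> rainbow_index e 3 <= 6.
Proof.
case/card_gt2P => [t0 [t1 [t2 [_ [_ t12 _]]]]].
pose cls x := if x == t1 then 1 else if x == t2 then 2 else 0.
have cls_lt x : cls x < 3 by rewrite /cls; case: (x == t1); case: (x == t2).
have cls_t1 : cls t1 = 1 by rewrite /cls eqxx.
have cls_t2 : cls t2 = 2 by rewrite /cls eqxx eq_sym (negbTE t12).
have cls_eq1 x : cls x = 1 -> x = t1 by rewrite /cls; case: eqP => // _; case: eqP.
have cls_eq2 x : cls x = 2 -> x = t2 by rewrite /cls; case: eqP => // _; case: eqP.
have cls_eq0 x y : x != y -> cls x = cls y -> cls x = 0.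
  move=> xy; case E: (cls x) (cls_lt x) => [|[|[|]]] // _ Ey.
  - by move: xy; rewrite (cls_eq1 _ E) (cls_eq1 y (esym Ey)) eqxx.
  - by move: xy; rewrite (cls_eq2 _ E) (cls_eq2 y (esym Ey)) eqxx.
pose c x y := class_color (cls x) (cls y).
have c_sym x y : c x y = c y x by apply: class_color_sym.
apply: (least_le (P := fun N => exists c, edge_coloring e N c /\ k_rainbow_coloring e 3 c)).
exists c; split=> [x y _|S /cards_eq3 [a [b [d [ab ad bd ->]]]]].
  by split; [apply: c_sym | apply: class_color_lt].
have tree (s : seq T) : uniq (a :: s) -> b \in s -> d \in s -> uniq (pairmap c a s) ->
    exists V F, S_tree e [set a; b; d] V F /\ rainbow c F.
  move=> us bs ds uc; apply: complete_path_S_tree us _ c_sym uc => x.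
  by rewrite !inE => /orP [/orP [] |] /eqP ->; rewrite ?eqxx ?bs ?ds ?orbT.
have [ad_cls|ad_cls] := eqVneq (cls a) (cls d); last first.
  apply: (tree [:: b; d]); rewrite /= ?inE ?eqxx ?orbT ?negb_or ?ab ?ad ?bd //.
  by rewrite andbT; apply: class_color_neq.
have [ab_cls|ab_cls] := eqVneq (cls a) (cls b); last first.
  have db : d != b by rewrite eq_sym.
  apply: (tree [:: d; b]); rewrite /= ?inE ?eqxx ?orbT ?negb_or ?ab ?ad ?db //.
  by rewrite andbT; apply: class_color_neq.
(* All three in the big class: detour through [t1] and [t2]. *)
have a0 : cls a = 0 := cls_eq0 _ _ ab ab_cls.
have b0 : cls b = 0 by rewrite -ab_cls.
have d0 : cls d = 0 by rewrite -ad_cls.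
have not_t x : cls x = 0 -> (x != t1) && (x != t2).
  by move=> x0; apply/andP; split; apply/eqP => Ex; move: x0; rewrite Ex ?cls_t1 ?cls_t2.
have /andP [at1 at2] := not_t _ a0; have /andP [bt1 bt2] := not_t _ b0.
have /andP [dt1 dt2] := not_t _ d0.
apply: (tree [:: b; t1; t2; d]); rewrite ?inE ?eqxx ?orbT //=.
  by rewrite !inE !negb_or ab at1 at2 ad bt1 bt2 bd t12 ![_ == d]eq_sym dt1 dt2.
by rewrite /c a0 b0 d0 cls_t1 cls_t2.
Qed.

End Complete.

Lemma contains_induced_trans (T1 T2 T3 : finType) (e1 : rel T1) (e2 : rel T2) (e3 : rel T3) :
  contains_induced e1 e2 -> contains_induced e2 e3 -> contains_induced e1 e3.
Proof.
move=> [f [f_inj fE]] [g [g_inj gE]]; exists (g \o f); split; first exact: inj_comp.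
by move=> a b /=; rewrite gE fE.
Qed.

Lemma isomorphic_contains_induced (T1 T2 : finType) (e1 : rel T1) (e2 : rel T2) :
  isomorphic e1 e2 -> contains_induced e1 e2.
Proof. by case=> f [/bij_inj f_inj fE]; exists f. Qed.

Lemma connected_has_edge (T : finType) (e : rel T) :
  connected_graph e -> 1 < #|T| -> exists x y, e x y.
Proof.
move=> e_conn /card_gt1P [x [y [_ _ xy]]].
by have [z exz] := connect_neighbor (e_conn x y) xy; exists x, z.
Qed.

Lemma path_graph3_star : path_graph 3 =2 star_rel (Ordinal (isT : 1 < 3)).
Proof. by do 2 case=> [[|[|[|?]]] ?]. Qed.

Section InducedInStar.
Variables (T : finType) (e : rel T).

Lemma induced_in_star (T' : finType) (b : T') :
  contains_induced e (star_rel b) -> (exists x y, e x y) -> exists a, e =2 star_rel a.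
Proof.
move=> [h [h_inj hE]] [x [y exy]].
have [a ha] : exists a, h a = b.
  have [hx|hxb] := eqVneq (h x) b; first by exists x.
  exists y; apply/eqP; move: exy; rewrite -hE /star_rel (negbTE hxb).
  by case: (h y == b).
by exists a => u v; rewrite -hE /star_rel -ha !(inj_eq h_inj).
Qed.

Variable a : T.
Hypothesis e_star : e =2 star_rel a.

Lemma star_rel_claw : 3 < #|T| -> contains_induced (star_graph 3) e.
Proof.
move=> T4; have [|f [f_inj fE]] := star_rel_induced (None : option 'I_3) a.
  by rewrite card_option card_ord.
by exists f; split=> // x y; rewrite e_star fE.
Qed.

Lemma star_rel_P3 : #|T| = 3 -> isomorphic e (path_graph 3).
Proof.
move=> T3; have [|f [f_bij fE]] := star_rel_isomorphic a (Ordinal (isT : 1 < 3)).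
  by rewrite card_ord.
by exists f; split=> // x y; rewrite path_graph3_star fE e_star.
Qed.

End InducedInStar.

Unset Implicit Arguments.

Theorem theorem5 (TX : finType) (eX : rel TX) :
  simple_graph eX -> connected_graph eX -> 3 <= #|TX| ->
  (exists C : nat, forall (T : finType) (e : rel T),
      simple_graph e -> connected_graph e -> 3 <= #|T| -> X_free eX e ->
      rainbow_index e 3 <= steiner_diam e 3 + C)
  <-> isomorphic eX (path_graph 3).
Proof.
move=> X_simple X_conn X3; split=> [[C bounded]|X_P3]; last first.
  exists 6 => T e e_simple e_conn T3 e_free; apply: leq_trans (leq_addl _ _).
  apply: complete_rainbow_index_le6 T3; apply: P3_free_complete e_simple _ e_conn.
  move=> P3_in_e; apply/e_free/(contains_induced_trans _ P3_in_e).
  exact: isomorphic_contains_induced.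
have [[m X_in_star]|X_not_in_star] := classic (exists m, contains_induced eX (star_graph m)).
  have [a X_star] := induced_in_star X_in_star (connected_has_edge X_conn (ltnW X3)).
  case: (ltnP 3 #|TX|) => [X4|X_le3]; last first.
    by apply: star_rel_P3 X_star _; apply/eqP; rewrite eqn_leq X_le3.
  have r0 : 'I_(C + 50) by exists 0; rewrite addnC.
  have corona_free : X_free eX (corona (C + 50)).
    move=> X_in; apply: (@corona_claw_free (C + 50)).
    exact: contains_induced_trans (star_rel_claw X_star X4) X_in.
  have corona3 : 2 < #|{: 'I_(C + 50) + 'I_(C + 50)}| by rewrite card_sum card_ord addnC.
  have := bounded _ _ (@corona_simple _) (corona_connected r0) corona3 corona_free.
  by rewrite leqNgt corona_gap.
have star3 : 2 < #|{: option 'I_(C + 17)}| by rewrite card_option card_ord addnC.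
have := bounded _ _ (star_rel_simple None) (star_rel_connected None) star3
  (fun X_in => X_not_in_star (ex_intro _ (C + 17) X_in)).
by rewrite leqNgt star_graph_gap.
Qed.
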